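(* Let $d>0$ and $a\geq 7$ be integers with $\gcd(a,d)=1$, and put $s_n=\frac{n}{2}\,[2a+(n-1)d]$ for $1\leq n\leq 4$, i.e. $s_1=a$, $s_2=2a+d$, $s_3=3a+3d$, $s_4=4a+6d$. Then $\{s_1,s_2,s_3,s_4\}$ is a minimal system of generators of the numerical semigroup $\Gamma_4=\langle s_1,s_2,s_3,s_4\rangle$ (no $s_j$ is a nonnegative integer combination of the others).
   Context: A numerical semigroup is a submonoid of $(\mathbb{N},+)$ with finite complement; it has a unique minimal system of generators. *)

From mathcomp Require Import all_boot.
Set Implicit Arguments. Unset Strict Implicit. Unset Printing Implicit Defensive.

(* s_n = n/2 * (2a + (n-1)d); the numerator n*(2a+(n-1)d) is always even. *)
Definition sn (a d n : nat) : nat := (n * (2 * a + (n - 1) * d)) %/ 2.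

Definition gens4 (a d : nat) : seq nat := [:: sn a d 1; sn a d 2; sn a d 3; sn a d 4].

Definition in_monoid (G : seq nat) (x : nat) : Prop :=
  exists c : nat -> nat, x = \sum_(i < size G) c i * nth 0 G i.

Definition generates_numerical_semigroup (G : seq nat) : Prop :=
  exists N : nat, forall n : nat, N <= n -> in_monoid G n.

Definition drop_nth (j : nat) (G : seq nat) : seq nat := take j G ++ drop j.+1 G.

Definition minimal_system_of_generators (G : seq nat) : Prop :=
  generates_numerical_semigroup G /\
  (forall j : nat, j < size G -> ~ in_monoid (drop_nth j G) (nth 0 G j)).

From Pilot Require Import Defs.
From mathcomp Require Import all_boot zify.

(* Write the generators in closed form
     s_k = k * a + C(k,2) * d        (k = 1, 2, 3, 4).
   Generation: a and s_2 = 2a + d are coprime, so by Sylvester's argument every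
   n >= a * s_2 is a nonnegative combination of a and s_2.
   Minimality: suppose s_m = sum_i c_i s_(k_i) with all parts k_i <> m.
   Collecting the coefficients of a and d gives N a + T d = m a + C(m,2) d with
   N = sum c_i k_i and T = sum c_i C(k_i,2).  Superadditivity of C(.,2) forces
   T <= C(m,2) <= 6 < a, and since gcd(a,d) = 1 the two representations must
   agree: N = m and T = C(m,2).  Then Q = sum c_i k_i^2 = 2T + N = m^2, but every
   part used is at most m - 1, whence Q <= (m - 1) N < m^2, a contradiction. *)

Lemma sn_closed (a d n : nat) : sn a d n = n * a + 'C(n, 2) * d.
Proof.
have bin2_double : 'C(n, 2) * 2 = n * (n - 1).
  by rewrite bin_ffact ffactnS ffactn1 subn1.
rewrite /sn mulnDr [n * (_ * d)]mulnA -bin2_double; lia.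
Qed.

Lemma sq_bin2 (k : nat) : k ^ 2 = 'C(k, 2) * 2 + k.
Proof. by elim: k => // k IH; rewrite binS bin1; lia. Qed.

Lemma sylvester (a b n : nat) : 0 < a -> 0 < b -> coprime b a -> a * b <= n ->
  exists x y, n = x * a + y * b.
Proof.
move=> a_gt0 b_gt0 cop nab.
have [u v Bezout _] := egcdnP a b_gt0; rewrite (eqP cop) in Bezout.
(* y is the residue of n * u modulo a, so that y * b = n mod a. *)
set y := (n * u) %% a.
have y_lt_a : y < a by rewrite ltn_mod.
have yb_le_n : y * b <= n.
  by apply: leq_trans nab; rewrite leq_mul2r (ltnW y_lt_a) orbT.
have yb_mod : y * b = n %[mod a].
  by rewrite /y modnMml -mulnA Bezout mulnDr muln1 mulnA modnMDl.
have a_dvd : a %| n - y * b by rewrite -(eqn_mod_dvd _ yb_le_n) yb_mod.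
by exists ((n - y * b) %/ a), y; rewrite divnK // subnK.
Qed.

Lemma coprime_repr_unique (a d p q m1 m2 : nat) : coprime a d -> p < a -> q < a ->
  p * d + m1 * a = q * d + m2 * a -> p = q /\ m1 = m2.
Proof.
move=> cop; wlog p_le_q : p q m1 m2 / p <= q.
  move=> W pa qa E; have [p_le_q|/ltnW] := leqP p q; first exact: W.
  by move=> q_le_p; have [-> ->] := W q p m2 m1 q_le_p qa pa (esym E).
move=> pa qa E.
have diff : (q - p) * d = (m1 - m2) * a by rewrite !mulnBl; lia.
have : a %| q - p by rewrite -(Gauss_dvdr _ cop) mulnC diff dvdn_mull.
have [q_eq_p _ | q_gt_p /dvdn_leq] := posnP (q - p); last by lia.
have p_eq_q : p = q by lia.
split=> //; subst q; apply/eqP; rewrite -(@eqn_pmul2r a); last by lia.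
by apply/eqP; lia.
Qed.

Section Parts.
Variables (n : nat) (c : nat -> nat) (k : 'I_n -> nat).

Let N := \sum_(i < n) c i * k i.
Let T := \sum_(i < n) c i * 'C(k i, 2).

Lemma part_le_total (i : 'I_n) : 0 < c i -> k i <= N.
Proof.
move=> ci_gt0; apply: leq_trans (leq_pmull _ ci_gt0) _.
by rewrite /N (bigD1 i) //= leq_addr.
Qed.

Lemma sum_sq_parts : \sum_(i < n) c i * k i ^ 2 = T * 2 + N.
Proof.
rewrite /T /N big_distrl -big_split /=; apply: eq_bigr => i _.
by rewrite sq_bin2 mulnDr mulnA.
Qed.

Lemma sum_sq_bounded (B : nat) : (forall i : 'I_n, 0 < c i -> k i <= B) ->
  \sum_(i < n) c i * k i ^ 2 <= B * N.
Proof.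
move=> kB; rewrite /N big_distrr; apply: leq_sum => i _.
have [-> // | /kB ki_le_B] := posnP (c i).
by rewrite mulnCA; apply: leq_mul.
Qed.

Lemma bin2_superadditive : T <= 'C(N, 2).
Proof.
have := @sum_sq_bounded N part_le_total.
by rewrite sum_sq_parts -[N * N]/(N ^ 2) sq_bin2 leq_add2r leq_mul2r.
Qed.

Lemma collect_combination (a d : nat) :
  \sum_(i < n) c i * (k i * a + 'C(k i, 2) * d) = N * a + T * d.
Proof.
rewrite /N /T !big_distrl -big_split /=; apply: eq_bigr => i _.
by rewrite mulnDr !mulnA.
Qed.

Lemma no_combination (a d m : nat) : coprime a d -> 0 < m -> 'C(m, 2) < a ->
  (forall i, k i != m) ->
  m * a + 'C(m, 2) * d <> \sum_(i < n) c i * (k i * a + 'C(k i, 2) * d).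
Proof.
move=> cop m_gt0 ma k_neq_m; rewrite collect_combination => E.
have a_gt0 : 0 < a by lia.
have T_le : T <= 'C(m, 2).
  have [N_le_m | m_lt_N] := leqP N m.
    exact: leq_trans bin2_superadditive (leq_bin2l _ N_le_m).
  have mN : m * a < N * a by rewrite ltn_pmul2r.
  have lt_d : T * d < 'C(m, 2) * d by lia.
  by move: lt_d; rewrite ltn_mul2r => /andP[_ /ltnW].
have [T_eq N_eq] : T = 'C(m, 2) /\ N = m.
  apply: (coprime_repr_unique _ _ _ _ _ _ cop (leq_ltn_trans T_le ma) ma); lia.
have parts_lt_m : forall i : 'I_n, 0 < c i -> k i <= m.-1.
  by move=> i /part_le_total; rewrite N_eq; have := k_neq_m i; lia.
have := @sum_sq_bounded m.-1 parts_lt_m.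
rewrite sum_sq_parts T_eq N_eq -sq_bin2; nia.
Qed.

End Parts.

Lemma drop_nth_map (f : nat -> nat) (j : nat) (s : seq nat) :
  Defs.drop_nth j (map f s) = map f (Defs.drop_nth j s).
Proof. by rewrite /Defs.drop_nth map_cat map_take map_drop. Qed.

Lemma nth_notin_drop_nth (x0 j : nat) (s : seq nat) :
  uniq s -> j < size s -> nth x0 s j \notin Defs.drop_nth j s.
Proof.
move=> s_uniq j_lt; move: s_uniq.
rewrite -{1}(cat_take_drop j s) (seq.drop_nth x0 j_lt) cat_uniq /=.
rewrite /Defs.drop_nth mem_cat negb_or.
by case/and4P=> _ /andP[/negbTE -> _] /negbTE -> _.
Qed.

Lemma in_monoid_map (f : nat -> nat) (s : seq nat) (x : nat) :
  in_monoid (map f s) x -> exists c : nat -> nat,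
    x = \sum_(i < size s) c i * f (nth 0 s i).
Proof.
case=> c ->; exists c; rewrite size_map; apply: eq_bigr => i _.
by rewrite (nth_map 0).
Qed.

(* Already a = s_1 and s_2 = 2a + d generate a numerical semigroup. *)
Lemma gens4_numerical (a d : nat) : 0 < a -> coprime a d ->
  generates_numerical_semigroup (gens4 a d).
Proof.
move=> a_gt0 cop; exists (a * sn a d 2) => n n_large.
have cop2 : coprime (sn a d 2) a.
  by rewrite /coprime sn_closed gcdnC gcdnMDl mul1n.
have sn2_gt0 : 0 < sn a d 2 by rewrite sn_closed; lia.
have [x [y ->]] := sylvester _ _ _ a_gt0 sn2_gt0 cop2 n_large.
exists (fun i => if i == 0 then x else if i == 1 then y else 0).
rewrite /gens4 /= !big_ord_recr big_ord0 /= !mul0n !addn0 add0n.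
by rewrite [sn a d 1]sn_closed mul1n addn0.
Qed.

Theorem theorem2p1 (a d : nat) :
  0 < d -> 7 <= a -> coprime a d ->
  minimal_system_of_generators (gens4 a d).
Proof.
move=> _ a_ge7 cop; split; first by apply: gens4_numerical => //; lia.
move=> j j_lt4.
have -> : gens4 a d = map (sn a d) (iota 1 4) by [].
rewrite drop_nth_map (nth_map 0) // sn_closed => /in_monoid_map[c].
under eq_bigr do rewrite sn_closed.
apply: (no_combination _ _ _ _ _ _ cop).
- by rewrite nth_iota.
- rewrite nth_iota // add1n.
  by apply: leq_ltn_trans (leq_bin2l 2 j_lt4) (leq_trans _ a_ge7).
- move=> i; apply: (contraNneq _ (nth_notin_drop_nth 0 _ _ (iota_uniq 1 4) j_lt4)).
  by move=> <-; exact: mem_nth.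
Qed.
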